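(* Let $N\ge 1$, let $\lambda_1,\dots,\lambda_N$ be distinct real numbers and $\mu_1,\dots,\mu_N$ nonzero real constants. On $\mathbb{R}^{6N}$ with coordinates $\phi_{ij},\psi_{ij}$ ($i=1,2,3$, $j=1,\dots,N$) consider the nonlinearized spatial system \[ \begin{pmatrix}\phi_{1j}\\ \phi_{2j}\\ \phi_{3j}\end{pmatrix}_x=U(\tilde u,\lambda_j)\begin{pmatrix}\phi_{1j}\\ \phi_{2j}\\ \phi_{3j}\end{pmatrix},\qquad \begin{pmatrix}\psi_{1j}\\ \psi_{2j}\\ \psi_{3j}\end{pmatrix}_x=-U(\tilde u,\lambda_j)^T\begin{pmatrix}\psi_{1j}\\ \psi_{2j}\\ \psi_{3j}\end{pmatrix},\quad j=1,\dots,N, \] where $\tilde u=(\tilde q,\tilde r)^T$ with $\tilde q=\sqrt2(\langle P_1,BQ_2\rangle+\langle P_2,BQ_3\rangle)$, $\tilde r=\sqrt2(\langle P_2,BQ_1\rangle+\langle P_3,BQ_2\rangle)$. Then the functions \[\bar F_j=\sum_{i=1}^3\phi_{ij}\psi_{ij},\qquad 1\le j\le N,\] are integrals of motion of this system (constant along its solutions), they are in involution, $\{\bar F_k,\bar F_l\}=0$ for all $1\le k,l\le N$, with respect to the Poisson bracket below, and they are independent (their gradients are linearly independent at every point) over the region \[\Omega=\Big\{(\phi,\psi)\in\mathbb{R}^{6N}:\ \sum_{i=1}^3(\phi_{ij}^2+\psi_{ij}^2)\neq 0\ \text{for all } 1\le j\le N\Big\}.\]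
   Context: For $u=(q,r)^T$ and a parameter $\lambda$, $U(u,\lambda)=\begin{pmatrix}-2\lambda&\sqrt2 q&0\\ \sqrt2 r&0&\sqrt2 q\\ 0&\sqrt2 r&2\lambda\end{pmatrix}$. $B=\mathrm{diag}(\mu_1,\dots,\mu_N)$, $P_i=(\phi_{i1},\dots,\phi_{iN})^T$, $Q_i=(\psi_{i1},\dots,\psi_{iN})^T$ for $i=1,2,3$, and $\langle\cdot,\cdot\rangle$ is the standard inner product on $\mathbb{R}^N$. The Poisson bracket on $\mathbb{R}^{6N}$ is $\{F,G\}=\sum_{i=1}^3\big(\langle \tfrac{\partial F}{\partial Q_i},B^{-1}\tfrac{\partial G}{\partial P_i}\rangle-\langle \tfrac{\partial F}{\partial P_i},B^{-1}\tfrac{\partial G}{\partial Q_i}\rangle\big)$, where $\frac{\partial}{\partial P_i}=(\frac{\partial}{\partial\phi_{i1}},\dots,\frac{\partial}{\partial\phi_{iN}})^T$ and similarly for $Q_i$. *)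

From Stdlib Require Import Reals Lra.
From Coquelicot Require Import Coquelicot.
Open Scope R_scope.

(* Indices are 0-based: i in {0,1,2} stands for i = 1,2,3 of the paper,
   j in {0,...,N-1} stands for j = 1,...,N. *)

Fixpoint rsum (n : nat) (f : nat -> R) : R :=
  match n with
  | O => 0
  | S m => rsum m f + f m
  end.

(* a point of R^{6N}: phi i j = phi_{ij}, psi i j = psi_{ij} *)
Definition state := ((nat -> nat -> R) * (nat -> nat -> R))%type.

Definition Umat (q r lam : R) (i k : nat) : R :=
  match i, k with
  | 0, 0 => - 2 * lam
  | 0, 1 => sqrt 2 * q
  | 1, 0 => sqrt 2 * r
  | 1, 2 => sqrt 2 * q
  | 2, 1 => sqrt 2 * r
  | 2, 2 => 2 * lam
  | _, _ => 0
  end.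

(* <X, B Y> with B = diag(mu_1..mu_N) *)
Definition ipB (N : nat) (mu : nat -> R) (X Y : nat -> R) : R :=
  rsum N (fun j => X j * mu j * Y j).

Definition qt (N : nat) (mu : nat -> R) (s : state) : R :=
  sqrt 2 * (ipB N mu (fst s 0%nat) (snd s 1%nat) + ipB N mu (fst s 1%nat) (snd s 2%nat)).
Definition rt (N : nat) (mu : nat -> R) (s : state) : R :=
  sqrt 2 * (ipB N mu (fst s 1%nat) (snd s 0%nat) + ipB N mu (fst s 2%nat) (snd s 1%nat)).

Definition Fbar (j : nat) (s : state) : R :=
  rsum 3 (fun i => fst s i j * snd s i j).

Definition upd (f : nat -> nat -> R) (i j : nat) (t : R) : nat -> nat -> R :=
  fun a b => if andb (Nat.eqb a i) (Nat.eqb b j) then t else f a b.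

Definition dphi (F : state -> R) (i j : nat) (s : state) : R :=
  Derive (fun t => F (upd (fst s) i j t, snd s)) (fst s i j).
Definition dpsi (F : state -> R) (i j : nat) (s : state) : R :=
  Derive (fun t => F (fst s, upd (snd s) i j t)) (snd s i j).

(* Poisson bracket
   {F,G} = sum_i ( <dF/dQ_i, B^{-1} dG/dP_i> - <dF/dP_i, B^{-1} dG/dQ_i> ) *)
Definition pbracket (N : nat) (mu : nat -> R) (F G : state -> R) (s : state) : R :=
  rsum 3 (fun i => rsum N (fun j =>
    dpsi F i j s * / mu j * dphi G i j s - dphi F i j s * / mu j * dpsi G i j s)).

Definition Omega (N : nat) (s : state) : Prop :=
  forall j, (j < N)%nat ->
    rsum 3 (fun i => fst s i j ^ 2 + snd s i j ^ 2) <> 0.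

Definition grads_independent (N : nat) (F : nat -> state -> R) (s : state) : Prop :=
  forall c : nat -> R,
    (forall i k, (i < 3)%nat -> (k < N)%nat ->
       rsum N (fun j => c j * dphi (F j) i k s) = 0 /\
       rsum N (fun j => c j * dpsi (F j) i k s) = 0) ->
    forall j, (j < N)%nat -> c j = 0.

Definition is_solution (N : nat) (lam mu : nat -> R)
    (ph ps : R -> nat -> nat -> R) (a b : R) : Prop :=
  forall x, a < x < b ->
    forall i j, (i < 3)%nat -> (j < N)%nat ->
      is_derive (fun y => ph y i j) x
        (rsum 3 (fun k => Umat (qt N mu (ph x, ps x)) (rt N mu (ph x, ps x)) (lam j) i k
                          * ph x k j)) /\
      is_derive (fun y => ps y i j) x
        (rsum 3 (fun k => - Umat (qt N mu (ph x, ps x)) (rt N mu (ph x, ps x)) (lam j) k i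
                          * ps x k j)).

(** Along the flow, [Fbar j] is the pairing of a solution [phi_j] of
    [phi' = U phi] with a solution [psi_j] of the adjoint system [psi' = - U^T psi], and
    such a pairing is conserved for any matrix [U], whatever its dependence on
    the point.  The partial derivatives of [Fbar k] are [psi_{ik}] in the
    [phi_{ik}]-direction and [phi_{ik}] in the [psi_{ik}]-direction, zero in
    all others; hence in [{Fbar k, Fbar l}] the two terms cancel coordinatewise,
    and a vanishing combination [sum_m c_m grad Fbar m] forces
    [c_j phi_{ij} = c_j psi_{ij} = 0], which contradicts [Omega] unless
    [c_j = 0]. *)

From Stdlib Require Import Reals Lra Lia.
From Coquelicot Require Import Coquelicot.
Open Scope R_scope.

Lemma rsum_ext (n : nat) (f g : nat -> R) :
  (forall i, (i < n)%nat -> f i = g i) -> rsum n f = rsum n g.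
Proof.
  induction n as [|n IH]; intros Hfg; simpl; [reflexivity|].
  rewrite IH by (intros; apply Hfg; lia); rewrite Hfg by lia; reflexivity.
Qed.

Lemma rsum_eq0 (n : nat) (f : nat -> R) :
  (forall i, (i < n)%nat -> f i = 0) -> rsum n f = 0.
Proof.
  intros Hf; rewrite (rsum_ext n f (fun _ => 0)) by exact Hf; clear Hf.
  induction n as [|n IH]; simpl; [|rewrite IH]; ring.
Qed.

Lemma rsum_plus (n : nat) (f g : nat -> R) :
  rsum n (fun i => f i + g i) = rsum n f + rsum n g.
Proof. induction n as [|n IH]; simpl; [|rewrite IH]; ring. Qed.

Lemma rsum_opp (n : nat) (f : nat -> R) :
  rsum n (fun i => - f i) = - rsum n f.
Proof. induction n as [|n IH]; simpl; [|rewrite IH]; ring. Qed.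

Lemma rsum_mult_l (n : nat) (c : R) (f : nat -> R) :
  rsum n (fun i => c * f i) = c * rsum n f.
Proof. induction n as [|n IH]; simpl; [|rewrite IH]; ring. Qed.

Lemma rsum_mult_r (n : nat) (c : R) (f : nat -> R) :
  rsum n (fun i => f i * c) = rsum n f * c.
Proof. induction n as [|n IH]; simpl; [|rewrite IH]; ring. Qed.

Lemma rsum_comm (n m : nat) (f : nat -> nat -> R) :
  rsum n (fun i => rsum m (fun k => f i k)) = rsum m (fun k => rsum n (fun i => f i k)).
Proof.
  induction n as [|n IH]; simpl.
  - symmetry; apply rsum_eq0; reflexivity.
  - rewrite IH, <- rsum_plus; reflexivity.
Qed.

Lemma rsum_kronecker (n k : nat) (f : nat -> R) :
  (k < n)%nat -> rsum n (fun i => if Nat.eqb i k then f i else 0) = f k.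
Proof.
  induction n as [|n IH]; intros Hk; [lia|]; simpl.
  destruct (Nat.eq_dec k n) as [->|Hkn].
  - rewrite Nat.eqb_refl, rsum_eq0; [ring|].
    intros i Hi; destruct (Nat.eqb_spec i n); [lia|reflexivity].
  - rewrite IH by lia; destruct (Nat.eqb_spec n k); [lia|ring].
Qed.

Lemma rsum_pairing_transpose (n : nat) (A : nat -> nat -> R) (u v : nat -> R) :
  rsum n (fun i => rsum n (fun k => A i k * u k) * v i)
  = rsum n (fun k => u k * rsum n (fun i => A i k * v i)).
Proof.
  rewrite (rsum_ext n _ (fun i => rsum n (fun k => A i k * u k * v i)))
    by (intros; symmetry; apply rsum_mult_r).
  rewrite rsum_comm; apply rsum_ext; intros k _.
  rewrite <- rsum_mult_l; apply rsum_ext; intros; ring.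
Qed.

Lemma is_derive_rsum (n : nat) (f : nat -> R -> R) (df : nat -> R) (x : R) :
  (forall i, (i < n)%nat -> is_derive (f i) x (df i)) ->
  is_derive (fun y => rsum n (fun i => f i y)) x (rsum n df).
Proof.
  induction n as [|n IH]; intros Hf; simpl.
  - exact (is_derive_const 0 x).
  - apply (is_derive_plus (fun y => rsum n (fun i => f i y)) (f n));
      [apply IH; intros; apply Hf; lia | apply Hf; lia].
Qed.

Lemma is_derive_pairing_adjoint (n : nat) (A : nat -> nat -> R)
    (u v : nat -> R -> R) (x : R) :
  (forall i, (i < n)%nat -> is_derive (u i) x (rsum n (fun k => A i k * u k x))) ->
  (forall i, (i < n)%nat -> is_derive (v i) x (rsum n (fun k => - A k i * v k x))) ->
  is_derive (fun y => rsum n (fun i => u i y * v i y)) x 0.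
Proof.
  intros Hu Hv.
  replace 0 with (rsum n (fun i =>
      rsum n (fun k => A i k * u k x) * v i x
      + u i x * rsum n (fun k => - A k i * v k x))).
  - apply (is_derive_rsum n (fun i y => u i y * v i y)); intros i Hi.
    apply (is_derive_mult (u i) (v i)); [apply Hu | apply Hv | ..]; trivial.
    exact Rmult_comm.
  - rewrite rsum_plus, rsum_pairing_transpose, <- rsum_plus.
    apply rsum_eq0; intros i _.
    rewrite (rsum_ext n (fun k => - A k i * v k x) (fun k => - (A k i * v k x)))
      by (intros; ring).
    rewrite rsum_opp; ring.
Qed.

Lemma is_derive_0_eq (f : R -> R) (a b x y : R) :
  (forall z, a < z < b -> is_derive f z 0) ->
  a < x < b -> a < y < b -> f x = f y.
Proof.
  intros Hf Hx Hy.
  assert (Hab : forall t, Rmin x y <= t <= Rmax x y -> a < t < b).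
  { intros t Ht; unfold Rmin, Rmax in Ht; destruct (Rle_dec x y); lra. }
  destruct (MVT_gen f x y (fun _ => 0)) as [c [_ Hc]].
  - intros t Ht; apply Hf, Hab; lra.
  - intros t Ht; apply continuity_pt_filterlim, (ex_derive_continuous f).
    exists 0; apply Hf, Hab, Ht.
  - lra.
Qed.

Lemma Fbar_conserved (N : nat) (lam mu : nat -> R) (ph ps : R -> nat -> nat -> R)
    (a b : R) (j : nat) (x y : R) :
  is_solution N lam mu ph ps a b -> (j < N)%nat -> a < x < b -> a < y < b ->
  Fbar j (ph x, ps x) = Fbar j (ph y, ps y).
Proof.
  intros Hsol Hj.
  apply (is_derive_0_eq (fun z => Fbar j (ph z, ps z))); intros z Hz.
  apply (is_derive_pairing_adjoint 3
           (Umat (qt N mu (ph z, ps z)) (rt N mu (ph z, ps z)) (lam j))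
           (fun i y => ph y i j) (fun i y => ps y i j));
    intros i Hi; apply (Hsol z Hz i j Hi Hj).
Qed.

Lemma Fbar_swap (k : nat) (p q : nat -> nat -> R) : Fbar k (p, q) = Fbar k (q, p).
Proof. unfold Fbar; simpl; ring. Qed.

Lemma dphi_Fbar (k i j : nat) (s : state) : (i < 3)%nat ->
  dphi (Fbar k) i j s = if Nat.eqb k j then snd s i k else 0.
Proof.
  intros Hi; unfold dphi, Fbar; apply is_derive_unique.
  destruct s as [p q]; simpl fst; simpl snd.
  destruct i as [|[|[|i]]]; try lia;
    destruct (Nat.eqb k j) eqn:E; cbn [rsum]; unfold upd; cbn [Nat.eqb andb];
    rewrite ?E; auto_derive; auto; ring.
Qed.

Lemma dpsi_Fbar (k i j : nat) (s : state) : (i < 3)%nat ->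
  dpsi (Fbar k) i j s = if Nat.eqb k j then fst s i k else 0.
Proof.
  intros Hi; destruct s as [p q].
  transitivity (dphi (Fbar k) i j (q, p)); [|apply dphi_Fbar, Hi].
  apply Derive_ext; intros t; apply Fbar_swap.
Qed.

Lemma pbracket_Fbar (N : nat) (mu : nat -> R) (k l : nat) (s : state) :
  pbracket N mu (Fbar k) (Fbar l) s = 0.
Proof.
  apply rsum_eq0; intros i Hi; apply rsum_eq0; intros j _.
  rewrite dpsi_Fbar, dphi_Fbar, dphi_Fbar, dpsi_Fbar by exact Hi.
  destruct (Nat.eqb_spec k j), (Nat.eqb_spec l j); subst; ring.
Qed.

Lemma Fbar_grads_independent (N : nat) (s : state) :
  Omega N s -> grads_independent N Fbar s.
Proof.
  intros HOmega c Hc j Hj.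
  destruct (Req_dec (c j) 0) as [|Hcj]; [assumption|exfalso].
  assert (Hcoord : forall i, (i < 3)%nat -> fst s i j = 0 /\ snd s i j = 0).
  { intros i Hi; destruct (Hc i j Hi Hj) as [Hphi Hpsi].
    rewrite (rsum_ext N _ (fun m => if Nat.eqb m j then c m * snd s i m else 0)),
      rsum_kronecker in Hphi
      by (trivial; intros m _; rewrite dphi_Fbar by exact Hi;
          destruct (Nat.eqb m j); ring).
    rewrite (rsum_ext N _ (fun m => if Nat.eqb m j then c m * fst s i m else 0)),
      rsum_kronecker in Hpsi
      by (trivial; intros m _; rewrite dpsi_Fbar by exact Hi;
          destruct (Nat.eqb m j); ring).
    split; [destruct (Rmult_integral _ _ Hpsi) | destruct (Rmult_integral _ _ Hphi)];
      tauto. }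
  apply (HOmega j Hj), rsum_eq0; intros i Hi.
  destruct (Hcoord i Hi) as [-> ->]; ring.
Qed.

Theorem theorem3p1 (N : nat) (lam mu : nat -> R)
  (HN : (1 <= N)%nat)
  (Hlam : forall j k, (j < N)%nat -> (k < N)%nat -> j <> k -> lam j <> lam k)
  (Hmu : forall j, (j < N)%nat -> mu j <> 0) :
  (* integrals of motion *)
  (forall (ph ps : R -> nat -> nat -> R) (a b : R),
     is_solution N lam mu ph ps a b ->
     forall j x y, (j < N)%nat -> a < x < b -> a < y < b ->
       Fbar j (ph x, ps x) = Fbar j (ph y, ps y)) /\
  (* involution *)
  (forall k l (s : state), (k < N)%nat -> (l < N)%nat ->
     pbracket N mu (Fbar k) (Fbar l) s = 0) /\
  (* independence over Omega *)
  (forall s : state, Omega N s -> grads_independent N Fbar s).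
Proof.
  split; [|split].
  - intros ph ps a b Hsol j x y; apply (Fbar_conserved N lam mu), Hsol.
  - intros k l s _ _; apply pbracket_Fbar.
  - apply Fbar_grads_independent.
Qed.
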